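(* The set $\mathbb F_0$ of origami numbers is a subfield of $\mathbb R$, and it is closed under the operation $\alpha\mapsto\sqrt{1+\alpha^2}$: if $\alpha\in\mathbb F_0$ then $\sqrt{1+\alpha^2}\in\mathbb F_0$.
   Context: An origami pair is a pair $(\mathcal P,\mathcal L)$ where $\mathcal P\subset\mathbb R^2$ is a set of points and $\mathcal L$ is a collection of lines in $\mathbb R^2$ such that: (i) the intersection point of any two non-parallel lines of $\mathcal L$ lies in $\mathcal P$; (ii) for any two distinct points of $\mathcal P$, the line through them is in $\mathcal L$; (iii) for any two distinct points of $\mathcal P$, the perpendicular bisector of the segment joining them is in $\mathcal L$; (iv) if $L_1,L_2\in\mathcal L$, then every line equidistant from $L_1$ and $L_2$ is in $\mathcal L$ (the midline if they are parallel, the angle bisectors if they intersect); (v) if $L_1,L_2\in\mathcal L$, then the mirror reflection of $L_2$ across $L_1$ is in $\mathcal L$. A set $\mathcal P\subset\mathbb R^2$ is closed under origami constructions if there is a collection of lines $\mathcal L$ with $(\mathcal P,\mathcal L)$ an origami pair. The set of origami constructible points is $\mathcal P_0=\bigcap\{\mathcal P : (0,0),(0,1)\in\mathcal P \text{ and } \mathcal P \text{ is closed under origami constructions}\}$. The set of origami numbers is $\mathbb F_0=\{\alpha\in\mathbb R : \exists v_1,v_2\in\mathcal P_0,\ |\alpha|=\operatorname{dist}(v_1,v_2)\}$. *)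

From Stdlib Require Import Reals.
Open Scope R_scope.

Definition point := (R * R)%type.
Definition pset := point -> Prop.

Definition line_eq (a b c : R) : pset := fun p => a * fst p + b * snd p = c.

Definition is_line (S : pset) : Prop :=
  exists a b c, (a <> 0 \/ b <> 0) /\ forall p, S p <-> line_eq a b c p.

Definition same_set (S T : pset) : Prop := forall p, S p <-> T p.

Definition inL (L : pset -> Prop) (S : pset) : Prop :=
  exists T, L T /\ same_set T S.

Definition dist (p q : point) : R :=
  sqrt ((fst p - fst q) ^ 2 + (snd p - snd q) ^ 2).

Definition dist_line (a b c : R) (p : point) : R :=
  Rabs (a * fst p + b * snd p - c) / sqrt (a ^ 2 + b ^ 2).

Definition line_through (p q : point) : pset :=
  fun x => (fst q - fst p) * (snd x - snd p) = (snd q - snd p) * (fst x - fst p).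

Definition perp_bisector (p q : point) : pset :=
  fun x => dist x p = dist x q.

Definition reflect (a b c : R) (p : point) : point :=
  let t := 2 * (a * fst p + b * snd p - c) / (a ^ 2 + b ^ 2) in
  (fst p - t * a, snd p - t * b).

Definition origami_pair (P : pset) (L : pset -> Prop) : Prop :=
  (forall S, L S -> is_line S) /\
  (forall S1 S2 p, L S1 -> L S2 -> ~ same_set S1 S2 -> S1 p -> S2 p -> P p) /\
  (forall p q, P p -> P q -> p <> q -> inL L (line_through p q)) /\
  (forall p q, P p -> P q -> p <> q -> inL L (perp_bisector p q)) /\
  (forall a1 b1 c1 a2 b2 c2 M,
      (a1 <> 0 \/ b1 <> 0) -> (a2 <> 0 \/ b2 <> 0) ->
      inL L (line_eq a1 b1 c1) -> inL L (line_eq a2 b2 c2) ->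
      ~ same_set (line_eq a1 b1 c1) (line_eq a2 b2 c2) ->
      is_line M ->
      (forall p, M p -> dist_line a1 b1 c1 p = dist_line a2 b2 c2 p) ->
      inL L M) /\
  (forall a b c S2, (a <> 0 \/ b <> 0) ->
      inL L (line_eq a b c) -> L S2 ->
      inL L (fun x => exists p, S2 p /\ x = reflect a b c p)).

Definition origami_closed (P : pset) : Prop :=
  exists L, origami_pair P L.

Definition P0 : pset :=
  fun v => forall P, P (0, 0) -> P (0, 1) -> origami_closed P -> P v.

Definition F0 (alpha : R) : Prop :=
  exists v1 v2, P0 v1 /\ P0 v2 /\ Rabs alpha = dist v1 v2.

(* Identify a real x with the point (x, 0).  Folding the unit segment gives the
   two axes and the diagonal; reflecting in them moves points between the axes
   and swaps coordinates, so a point is constructible iff both its coordinates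
   are.  Midpoints (perpendicular bisectors) followed by a reflection give sums,
   and the intersection of the line through (0,0) and (1,y) with the vertical at
   x gives x y, similar triangles giving inverses likewise.  The angle bisector
   of the x-axis and the line through (0,0) and (1,x) has slope
   x / (1 + sqrt (1 + x^2)) (half-angle formula), from which sqrt (1 + x^2) is
   recovered by field operations.  Finally sqrt (u^2 + w^2) = |u| sqrt (1 + (w/u)^2)
   shows that distances between constructible points are constructible reals. *)

From Pilot Require Import Defs.
From Stdlib Require Import Reals Lra Psatz.
Open Scope R_scope.

Lemma sum_sq_neq0 a b : a <> 0 \/ b <> 0 -> a ^ 2 + b ^ 2 <> 0.
Proof. intros [H|H] E; apply H; nra. Qed.

Lemma reflect_involutive a b c z :
  a ^ 2 + b ^ 2 <> 0 -> reflect a b c (reflect a b c z) = z.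
Proof. intros Hn; destruct z; unfold reflect; cbn; f_equal; field; auto; lra. Qed.

Lemma reflect_horizontal m z : reflect 0 1 m z = (fst z, 2 * m - snd z).
Proof. destruct z; unfold reflect; cbn; f_equal; field. Qed.

Lemma reflect_vertical a c z :
  a <> 0 -> reflect a 0 c z = (2 * c / a - fst z, snd z).
Proof. intro Ha; destruct z; unfold reflect; cbn; f_equal; field; auto. Qed.

Lemma reflect_diagonal z : reflect 1 (-1) 0 z = (snd z, fst z).
Proof. destruct z; unfold reflect; cbn; f_equal; field. Qed.

Lemma cross_eq0_iff_dot_eq0 d1 d2 a b u v :
  d1 <> 0 \/ d2 <> 0 -> a <> 0 \/ b <> 0 -> a * d1 + b * d2 = 0 ->
  (d1 * v = d2 * u <-> a * u + b * v = 0).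
Proof.
  intros Hd Hab Hp. destruct (Req_dec d1 0) as [->|Hd1].
  - assert (Hd2 : d2 <> 0) by (destruct Hd; lra).
    assert (Hb : b = 0) by (apply (Rmult_eq_reg_r d2); lra). subst b.
    assert (Ha : a <> 0) by (destruct Hab; lra).
    split; intro K.
    + assert (u = 0) by (apply (Rmult_eq_reg_l d2); lra). subst; lra.
    + assert (u = 0) by (apply (Rmult_eq_reg_l a); lra). subst; lra.
  - split; intro K.
    + apply (Rmult_eq_reg_l d1); [|exact Hd1].
      replace (d1 * (a * u + b * v)) with (u * (a * d1 + b * d2) + b * (d1 * v - d2 * u))
        by ring.
      rewrite Hp, K; ring.
    + assert (Hb : b <> 0).
      { intros ->. destruct Hab as [Ha|]; [|lra].
        apply Ha, (Rmult_eq_reg_r d1); lra. }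
      apply (Rmult_eq_reg_l b); [|exact Hb].
      replace (b * (d1 * v))
        with (d1 * (a * u + b * v) - u * (a * d1 + b * d2) + b * d2 * u) by ring.
      rewrite Hp, K; ring.
Qed.

Definition has_line (L : pset -> Prop) (a b c : R) : Prop := inL L (line_eq a b c).

Lemma has_line_ext L a b c a' b' c' :
  has_line L a b c -> (forall z, line_eq a b c z <-> line_eq a' b' c' z) ->
  has_line L a' b' c'.
Proof. intros [T [HT HS]] E. exists T; split; auto. intro p; rewrite (HS p); apply E. Qed.

Ltac solve_line_equiv :=
  let z1 := fresh "z" in let z2 := fresh "z" in
  intros [z1 z2]; unfold line_eq; cbn [fst snd]; split; intro; lra.
Ltac solve_line_equiv_by R :=
  let z1 := fresh "z" in let z2 := fresh "z" in
  intros [z1 z2]; rewrite R by lra; unfold line_eq; cbn [fst snd]; split; intro; lra.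
Ltac points_neq := let E := fresh in intro E; injection E; intros; lra.

Section OrigamiPair.
Variables (P : pset) (L : pset -> Prop).
Hypothesis HPL : origami_pair P L.

Lemma meet_in_P a1 b1 c1 a2 b2 c2 x y :
  has_line L a1 b1 c1 -> has_line L a2 b2 c2 -> a1 * b2 - a2 * b1 <> 0 ->
  a1 * x + b1 * y = c1 -> a2 * x + b2 * y = c2 -> P (x, y).
Proof.
  destruct HPL as [_ [Hmeet _]].
  intros [T1 [HT1 HS1]] [T2 [HT2 HS2]] Hdet E1 E2.
  apply (Hmeet T1 T2); auto.
  - intro Hsame.
    assert (K : line_eq a2 b2 c2 (x + b1, y - a1)).
    { apply HS2, Hsame, HS1. unfold line_eq; cbn; lra. }
    unfold line_eq in K; cbn in K. apply Hdet; nra.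
  - apply HS1; unfold line_eq; cbn; auto.
  - apply HS2; unfold line_eq; cbn; auto.
Qed.

Lemma line_through_in_L p q a b c :
  P p -> P q -> p <> q -> a <> 0 \/ b <> 0 ->
  a * fst p + b * snd p = c -> a * fst q + b * snd q = c -> has_line L a b c.
Proof.
  destruct HPL as [_ [_ [Hthrough _]]].
  intros Hp Hq Hpq Hab E1 E2.
  destruct (Hthrough p q Hp Hq Hpq) as [T [HT HS]]. exists T; split; auto.
  intro z. rewrite (HS z).
  destruct p as [p1 p2], q as [q1 q2], z as [z1 z2].
  unfold line_through, line_eq in *; cbn in *.
  assert (Hd : q1 - p1 <> 0 \/ q2 - p2 <> 0).
  { destruct (Req_dec q1 p1); [|left; lra].
    destruct (Req_dec q2 p2); [|right; lra]. subst; tauto. }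
  pose proof (cross_eq0_iff_dot_eq0 (q1 - p1) (q2 - p2) a b (z1 - p1) (z2 - p2)
                Hd Hab ltac:(lra)) as Hiff.
  split; intro K.
  - enough (a * (z1 - p1) + b * (z2 - p2) = 0) by lra. apply Hiff; lra.
  - apply Hiff; lra.
Qed.

Lemma perp_bisector_in_L p q :
  P p -> P q -> p <> q ->
  has_line L (2 * (fst q - fst p)) (2 * (snd q - snd p))
             (fst q ^ 2 + snd q ^ 2 - fst p ^ 2 - snd p ^ 2).
Proof.
  destruct HPL as [_ [_ [_ [Hbisect _]]]].
  intros Hp Hq Hpq.
  destruct (Hbisect p q Hp Hq Hpq) as [T [HT HS]]. exists T; split; auto.
  intro z. rewrite (HS z).
  destruct p as [p1 p2], q as [q1 q2], z as [z1 z2].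
  unfold perp_bisector, Defs.dist, line_eq; cbn [fst snd].
  split; intro K.
  - apply sqrt_inj in K; [nra | |];
      apply Rplus_le_le_0_compat; apply pow2_ge_0.
  - f_equal; nra.
Qed.

Lemma reflected_line_in_L a b c a2 b2 c2 A B C :
  a <> 0 \/ b <> 0 -> has_line L a b c -> has_line L a2 b2 c2 ->
  (forall z, line_eq A B C z <-> line_eq a2 b2 c2 (reflect a b c z)) ->
  has_line L A B C.
Proof.
  destruct HPL as [_ [_ [_ [_ [_ Hreflect]]]]].
  intros Hab Hm [T [HT HS]] E.
  pose proof (reflect_involutive a b c) as Hinv.
  destruct (Hreflect a b c T Hab Hm HT) as [U [HU HUS]]. exists U; split; auto.
  intro z. rewrite (HUS z), (E z), <- (HS (reflect a b c z)). split.
  - intros [p [Tp ->]]. rewrite Hinv; auto using sum_sq_neq0.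
  - intro K. exists (reflect a b c z). rewrite Hinv; auto using sum_sq_neq0.
Qed.

Lemma equidistant_line_in_L a1 b1 c1 a2 b2 c2 A B C :
  a1 <> 0 \/ b1 <> 0 -> a2 <> 0 \/ b2 <> 0 -> A <> 0 \/ B <> 0 ->
  has_line L a1 b1 c1 -> has_line L a2 b2 c2 ->
  ~ same_set (line_eq a1 b1 c1) (line_eq a2 b2 c2) ->
  (forall p, line_eq A B C p -> dist_line a1 b1 c1 p = dist_line a2 b2 c2 p) ->
  has_line L A B C.
Proof.
  destruct HPL as [_ [_ [_ [_ [Hequidist _]]]]].
  intros H1 H2 H3 L1 L2 Hdiff Hd.
  apply (Hequidist a1 b1 c1 a2 b2 c2); auto.
  exists A, B, C; split; [auto | tauto].
Qed.

Hypotheses (HO : P (0, 0)) (HE : P (0, 1)).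

Lemma y_axis_in_L : has_line L 1 0 0.
Proof. apply (line_through_in_L (0, 0) (0, 1)); cbn; auto; try lra. points_neq. Qed.

Lemma axes_diagonal_half :
  has_line L 0 1 0 /\ has_line L 1 (-1) 0 /\ P (1 / 2, 0).
Proof.
  assert (Hhalf : has_line L 0 1 (1 / 2)).
  { eapply has_line_ext; [apply (perp_bisector_in_L (0, 0) (0, 1)); auto; points_neq|].
    solve_line_equiv. }
  assert (Hmid : P (0, 1 / 2)).
  { apply (meet_in_P 1 0 0 0 1 (1 / 2)); auto using y_axis_in_L; lra. }
  assert (Hquarter : has_line L 0 1 (1 / 4)).
  { eapply has_line_ext; [apply (perp_bisector_in_L (0, 0) (0, 1 / 2)); auto; points_neq|].
    solve_line_equiv. }
  assert (Hx : has_line L 0 1 0).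
  { apply (reflected_line_in_L 0 1 (1 / 4) 0 1 (1 / 2)); auto.
    solve_line_equiv_by reflect_horizontal. }
  assert (Hdiag : has_line L 1 (-1) 0).
  { apply (equidistant_line_in_L 1 0 0 0 1 0); auto using y_axis_in_L.
    - intro Hs. destruct (Hs (0, 1)) as [K _]. unfold line_eq in K; cbn in K. lra.
    - intros [p1 p2] Hp. unfold line_eq in Hp; cbn in Hp. unfold dist_line; cbn [fst snd].
      replace (1 * p1 + 0 * p2 - 0) with (0 * p1 + 1 * p2 - 0) by lra.
      replace (1 ^ 2 + 0 ^ 2) with (0 ^ 2 + 1 ^ 2) by ring. reflexivity. }
  assert (Hvert : has_line L 1 0 (1 / 2)).
  { apply (reflected_line_in_L 1 (-1) 0 0 1 (1 / 2)); auto.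
    solve_line_equiv_by reflect_diagonal. }
  repeat split; auto.
  apply (meet_in_P 1 0 (1 / 2) 0 1 0); auto; lra.
Qed.

Lemma x_axis_in_L : has_line L 0 1 0.
Proof. apply axes_diagonal_half. Qed.

Lemma diagonal_in_L : has_line L 1 (-1) 0.
Proof. apply axes_diagonal_half. Qed.

Lemma vertical_line_in_L x : P (x, 0) -> has_line L 1 0 x.
Proof.
  intro Hx. destruct (Req_dec x 0) as [->|Hx0]; [apply y_axis_in_L|].
  assert (M : has_line L (2 * x) 0 (x ^ 2)).
  { eapply has_line_ext; [apply (perp_bisector_in_L (0, 0) (x, 0)); auto; points_neq|].
    solve_line_equiv. }
  apply (reflected_line_in_L (2 * x) 0 (x ^ 2) 1 0 0);
    [left; lra | exact M | apply y_axis_in_L |].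
  intros [z1 z2]. rewrite reflect_vertical by lra. unfold line_eq; cbn [fst snd].
  replace (2 * x ^ 2 / (2 * x)) with x by (field; auto). split; intro; lra.
Qed.

Lemma horizontal_line_in_L y : P (y, 0) -> has_line L 0 1 y.
Proof.
  intro Hy. apply (reflected_line_in_L 1 (-1) 0 1 0 y);
    auto using diagonal_in_L, vertical_line_in_L.
  solve_line_equiv_by reflect_diagonal.
Qed.

Lemma point_in_P a b : P (a, 0) -> P (b, 0) -> P (a, b).
Proof.
  intros Ha Hb. apply (meet_in_P 1 0 a 0 1 b);
    auto using vertical_line_in_L, horizontal_line_in_L; lra.
Qed.

Lemma opp_in_P x : P (x, 0) -> P (- x, 0).
Proof.
  intro Hx. assert (V : has_line L 1 0 (- x)).
  { apply (reflected_line_in_L 1 0 0 1 0 x); auto using y_axis_in_L, vertical_line_in_L.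
    solve_line_equiv_by (reflect_vertical 1 0). }
  apply (meet_in_P 1 0 (- x) 0 1 0); auto using x_axis_in_L; lra.
Qed.

Lemma midpoint_in_P x y : P (x, 0) -> P (y, 0) -> P ((x + y) / 2, 0).
Proof.
  intros Hx Hy. destruct (Req_dec x y) as [<-|Hxy].
  - replace ((x + x) / 2) with x by field. exact Hx.
  - pose proof (perp_bisector_in_L (x, 0) (y, 0) Hx Hy ltac:(points_neq)) as M.
    cbn [fst snd] in M.
    apply (meet_in_P _ _ _ 0 1 0 _ _ M x_axis_in_L); [lra | field | field].
Qed.

Lemma add_in_P x y : P (x, 0) -> P (y, 0) -> P (x + y, 0).
Proof.
  intros Hx Hy. pose proof (vertical_line_in_L _ (midpoint_in_P x y Hx Hy)) as Hmid.
  assert (V : has_line L 1 0 (x + y)).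
  { apply (reflected_line_in_L 1 0 ((x + y) / 2) 1 0 0); auto using y_axis_in_L.
    solve_line_equiv_by (reflect_vertical 1 ((x + y) / 2)). }
  apply (meet_in_P 1 0 (x + y) 0 1 0); auto using x_axis_in_L; lra.
Qed.

Lemma one_in_P : P (1, 0).
Proof.
  replace 1 with (1 / 2 + 1 / 2) by field. apply add_in_P; apply axes_diagonal_half.
Qed.

Lemma fst_in_P a b : P (a, b) -> P (a, 0).
Proof.
  intro Hab. destruct (Req_dec b 0) as [->|Hb]; [exact Hab|].
  destruct (Req_dec a 0) as [->|Ha]; [exact HO|].
  assert (L1 : has_line L b (- a) 0).
  { apply (line_through_in_L (0, 0) (a, b)); cbn; auto; try lra. points_neq. }
  assert (L2 : has_line L (b - 1) (- a) (- a)).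
  { apply (line_through_in_L (0, 1) (a, b)); cbn; auto; try lra. points_neq. }
  assert (R1 : has_line L b a 0).
  { apply (reflected_line_in_L 0 1 0 b (- a) 0); auto using x_axis_in_L.
    solve_line_equiv_by reflect_horizontal. }
  assert (R2 : has_line L (b - 1) a (- a)).
  { apply (reflected_line_in_L 0 1 0 (b - 1) (- a) (- a)); auto using x_axis_in_L.
    solve_line_equiv_by reflect_horizontal. }
  assert (Hmirror : P (a, - b)) by (apply (meet_in_P _ _ _ _ _ _ _ _ R1 R2); lra).
  assert (V : has_line L 1 0 a).
  { apply (line_through_in_L (a, b) (a, - b)); cbn; auto; try lra. points_neq. }
  apply (meet_in_P _ _ _ _ _ _ _ _ V x_axis_in_L); lra.
Qed.

Lemma swap_in_P a b : P (a, b) -> a <> 0 -> P (b, a).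
Proof.
  intros Hab Ha.
  assert (L1 : has_line L b (- a) 0).
  { apply (line_through_in_L (0, 0) (a, b)); cbn; auto; try lra. points_neq. }
  assert (L2 : has_line L (b - 1) (- a) (- a)).
  { apply (line_through_in_L (0, 1) (a, b)); cbn; auto; try lra. points_neq. }
  assert (R1 : has_line L (- a) b 0).
  { apply (reflected_line_in_L 1 (-1) 0 b (- a) 0); auto using diagonal_in_L.
    solve_line_equiv_by reflect_diagonal. }
  assert (R2 : has_line L (- a) (b - 1) (- a)).
  { apply (reflected_line_in_L 1 (-1) 0 (b - 1) (- a) (- a)); auto using diagonal_in_L.
    solve_line_equiv_by reflect_diagonal. }
  apply (meet_in_P _ _ _ _ _ _ _ _ R1 R2); lra.
Qed.

Lemma snd_in_P a b : P (a, b) -> P (b, 0).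
Proof.
  intro Hab. destruct (Req_dec a 0) as [->|Ha].
  - destruct (Req_dec b 0) as [->|Hb]; [exact HO|].
    assert (L1 : has_line L b 1 b).
    { apply (line_through_in_L (0, b) (1, 0)); cbn; auto using one_in_P; try lra.
      points_neq. }
    assert (R1 : has_line L 1 b b).
    { apply (reflected_line_in_L 1 (-1) 0 b 1 b); auto using diagonal_in_L.
      solve_line_equiv_by reflect_diagonal. }
    apply (meet_in_P _ _ _ _ _ _ _ _ R1 x_axis_in_L); lra.
  - apply (fst_in_P b a), swap_in_P; auto.
Qed.

Lemma mul_in_P x y : P (x, 0) -> P (y, 0) -> P (x * y, 0).
Proof.
  intros Hx Hy.
  assert (L1 : has_line L y (-1) 0).
  { apply (line_through_in_L (0, 0) (1, y)); cbn; auto using point_in_P, one_in_P;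
      try lra. points_neq. }
  apply (snd_in_P x).
  apply (meet_in_P _ _ _ _ _ _ _ _ L1 (vertical_line_in_L x Hx)); lra.
Qed.

Lemma inv_in_P x : P (x, 0) -> x <> 0 -> P (/ x, 0).
Proof.
  intros Hx Hx0.
  assert (L1 : has_line L 1 (- x) 0).
  { apply (line_through_in_L (0, 0) (x, 1)); cbn; auto using point_in_P, one_in_P;
      try lra. points_neq. }
  apply (snd_in_P 1).
  apply (meet_in_P _ _ _ _ _ _ _ _ L1 (vertical_line_in_L 1 one_in_P)); try lra.
  field; auto.
Qed.

Lemma sqrt_1_plus_sq_in_P x : P (x, 0) -> P (sqrt (1 + x ^ 2), 0).
Proof.
  intro Hx. destruct (Req_dec x 0) as [->|Hx0].
  { replace (1 + 0 ^ 2) with 1 by ring. rewrite sqrt_1. apply one_in_P. }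
  set (r := sqrt (1 + x ^ 2)).
  assert (Hr : 1 <= r).
  { rewrite <- sqrt_1 at 1. apply sqrt_le_1_alt. nra. }
  assert (Hslope : has_line L x (-1) 0).
  { apply (line_through_in_L (0, 0) (1, x)); cbn; auto using point_in_P, one_in_P;
      try lra. points_neq. }
  assert (Hbisector : has_line L x (- (1 + r)) 0).
  { apply (equidistant_line_in_L 0 1 0 x (-1) 0); auto using x_axis_in_L; try lra.
    - intro Hs. destruct (Hs (1, 0)) as [K _]. unfold line_eq in K; cbn in K. lra.
    - intros [p1 p2] Hp. unfold line_eq in Hp; cbn [fst snd] in Hp.
      unfold dist_line; cbn [fst snd].
      replace (x * p1 + -1 * p2 - 0) with (r * p2) by lra.
      replace (0 * p1 + 1 * p2 - 0) with p2 by ring.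
      replace (0 ^ 2 + 1 ^ 2) with 1 by ring.
      replace (x ^ 2 + (-1) ^ 2) with (1 + x ^ 2) by ring.
      rewrite sqrt_1. fold r.
      rewrite Rabs_mult, (Rabs_pos_eq r) by lra. field. lra. }
  assert (Ht : P (x / (1 + r), 0)).
  { apply (snd_in_P 1).
    apply (meet_in_P _ _ _ _ _ _ _ _ Hbisector (vertical_line_in_L 1 one_in_P)); try lra.
    field. lra. }
  assert (Ht0 : x / (1 + r) <> 0).
  { unfold Rdiv. apply Rmult_integral_contrapositive_currified; auto.
    apply Rinv_neq_0_compat. lra. }
  replace r with (x * / (x / (1 + r)) + - (1)) by (field; lra).
  auto using add_in_P, mul_in_P, inv_in_P, opp_in_P, one_in_P.
Qed.

Lemma abs_in_P x : P (x, 0) -> P (Rabs x, 0).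
Proof.
  intro Hx. destruct (Rcase_abs x); [rewrite Rabs_left | rewrite Rabs_right];
    auto using opp_in_P; lra.
Qed.

Lemma hypot_in_P u w : P (u, 0) -> P (w, 0) -> P (sqrt (u ^ 2 + w ^ 2), 0).
Proof.
  intros Hu Hw. destruct (Req_dec u 0) as [->|Hu0].
  - replace (0 ^ 2 + w ^ 2) with (Rsqr w) by (unfold Rsqr; ring).
    rewrite sqrt_Rsqr_abs. auto using abs_in_P.
  - replace (u ^ 2 + w ^ 2) with (Rsqr u * (1 + (w * / u) ^ 2))
      by (unfold Rsqr; field; auto).
    rewrite sqrt_mult, sqrt_Rsqr_abs by (try apply Rle_0_sqr; nra).
    auto using mul_in_P, abs_in_P, sqrt_1_plus_sq_in_P, inv_in_P.
Qed.

End OrigamiPair.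

Lemma P0_of_closure (u v w : point) : P0 u -> P0 v ->
  (forall P L, origami_pair P L -> P (0, 0) -> P (0, 1) -> P u -> P v -> P w) -> P0 w.
Proof.
  intros Hu Hv K P HO HE [L HL].
  apply (K P L); auto; [apply Hu | apply Hv]; auto; now exists L.
Qed.

Lemma P0_origin : P0 (0, 0).
Proof. now intros P HO. Qed.

Definition constructible_real (x : R) : Prop := P0 (x, 0).

Lemma constructible_one : constructible_real 1.
Proof.
  apply (P0_of_closure _ _ _ P0_origin P0_origin).
  intros P L ? ? ? ? ?; apply (one_in_P P L); auto.
Qed.

Lemma constructible_add x y :
  constructible_real x -> constructible_real y -> constructible_real (x + y).
Proof.
  intros Hx Hy. apply (P0_of_closure _ _ _ Hx Hy).
  intros P L ? ? ? ? ?; apply (add_in_P P L); auto.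
Qed.

Lemma constructible_opp x : constructible_real x -> constructible_real (- x).
Proof.
  intro Hx. apply (P0_of_closure _ _ _ Hx Hx).
  intros P L ? ? ? ? ?; apply (opp_in_P P L); auto.
Qed.

Lemma constructible_mul x y :
  constructible_real x -> constructible_real y -> constructible_real (x * y).
Proof.
  intros Hx Hy. apply (P0_of_closure _ _ _ Hx Hy).
  intros P L ? ? ? ? ?; apply (mul_in_P P L); auto.
Qed.

Lemma constructible_inv x : constructible_real x -> x <> 0 -> constructible_real (/ x).
Proof.
  intros Hx Hx0. apply (P0_of_closure _ _ _ Hx Hx).
  intros P L ? ? ? ? ?; apply (inv_in_P P L); auto.
Qed.

Lemma constructible_sqrt_1_plus_sq x :
  constructible_real x -> constructible_real (sqrt (1 + x ^ 2)).
Proof.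
  intro Hx. apply (P0_of_closure _ _ _ Hx Hx).
  intros P L ? ? ? ? ?; apply (sqrt_1_plus_sq_in_P P L); auto.
Qed.

Lemma constructible_hypot x y : constructible_real x -> constructible_real y ->
  constructible_real (sqrt (x ^ 2 + y ^ 2)).
Proof.
  intros Hx Hy. apply (P0_of_closure _ _ _ Hx Hy).
  intros P L ? ? ? ? ?; apply (hypot_in_P P L); auto.
Qed.

Lemma constructible_fst a b : P0 (a, b) -> constructible_real a.
Proof.
  intro Hp. apply (P0_of_closure _ _ _ Hp Hp).
  intros P L ? ? ? ? ?; eapply (fst_in_P P L); eauto.
Qed.

Lemma constructible_snd a b : P0 (a, b) -> constructible_real b.
Proof.
  intro Hp. apply (P0_of_closure _ _ _ Hp Hp).
  intros P L ? ? ? ? ?; eapply (snd_in_P P L); eauto.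
Qed.

Lemma constructible_abs_inv x : constructible_real (Rabs x) -> constructible_real x.
Proof.
  intro H. destruct (Rcase_abs x).
  - rewrite Rabs_left in H by auto.
    replace x with (- - x) by ring. now apply constructible_opp.
  - now rewrite Rabs_right in H.
Qed.

Lemma F0_iff_constructible x : F0 x <-> constructible_real x.
Proof.
  split.
  - intros [[a b] [[c d] [H1 [H2 E]]]]. apply constructible_abs_inv. rewrite E.
    unfold Defs.dist; cbn [fst snd].
    apply constructible_hypot; apply constructible_add; try apply constructible_opp;
      eauto using constructible_fst, constructible_snd.
  - intro Hx. exists (x, 0), (0, 0). repeat split; auto using P0_origin.
    unfold Defs.dist; cbn [fst snd].
    replace ((x - 0) ^ 2 + (0 - 0) ^ 2) with (Rsqr x) by (unfold Rsqr; ring).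
    now rewrite sqrt_Rsqr_abs.
Qed.

Theorem mainTheorem3 :
  (* F0 is a subfield of R *)
  (F0 0 /\ F0 1 /\
   (forall x y, F0 x -> F0 y -> F0 (x + y)) /\
   (forall x, F0 x -> F0 (- x)) /\
   (forall x y, F0 x -> F0 y -> F0 (x * y)) /\
   (forall x, F0 x -> x <> 0 -> F0 (/ x))) /\
  (* closure under alpha |-> sqrt (1 + alpha^2) *)
  (forall alpha, F0 alpha -> F0 (sqrt (1 + alpha ^ 2))).
Proof.
  setoid_rewrite F0_iff_constructible.
  repeat split; intros.
  - exact P0_origin.
  - exact constructible_one.
  - now apply constructible_add.
  - now apply constructible_opp.
  - now apply constructible_mul.
  - now apply constructible_inv.
  - now apply constructible_sqrt_1_plus_sq.
Qed.
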